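(* Let $G=\mathbb{Z}_2\times\mathbb{Z}_4$ and let $\theta_1,\theta_2$ be normalised orthomorphisms of $G$, with associated sets $A_{ij}$ (for $\theta_1$) and $A'_{ij}$ (for $\theta_2$). Write $\delta(g)=\theta_1(g)^{-1}\theta_2(g)$. Then $\theta_1\perp\theta_2$ if and only if (a) the sets $\delta(A_{44}\cap A'_{44})$, $\delta(A_{24}\cap A'_{24})$, $\delta(A_{42}\cap A'_{42})$, $\delta(A_{22}\cap A'_{22})$ are pairwise disjoint and their union is $\{g\in G: o(g)=2\}$, and (b) the sets $\delta(A_{44}\cap A'_{42})$, $\delta(A_{42}\cap A'_{44})$, $\delta(A_{24}\cap A'_{22})$, $\delta(A_{22}\cap A'_{24})$ are pairwise disjoint and their union is $\{g\in G: o(g)=4\}$.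
   Context: $G$ is written multiplicatively with identity $e$; $o(g)$ is the order of $g$. A normalised orthomorphism of $G$ is a bijection $\theta\colon G\to G$ with $\theta(e)=e$ such that $x\mapsto x^{-1}\theta(x)$ is a bijection of $G$. Two orthomorphisms are orthogonal, $\theta_1\perp\theta_2$, if $x\mapsto\theta_1(x)^{-1}\theta_2(x)$ is a bijection of $G$. For an orthomorphism $\theta$: $A_{44}=\{x: o(x)=4, o(\theta(x))=4\}$, $A_{42}=\{x: o(x)=4, o(\theta(x))=2\}$, $A_{24}=\{x: o(x)=2, o(\theta(x))=4\}$, $A_{22}=\{x: o(x)=2, o(\theta(x))=2\}$; $A_{ij}$ are these sets for $\theta_1$ and $A'_{ij}$ those for $\theta_2$. *)

From HB Require Import structures.
From mathcomp Require Import all_boot all_fingroup.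
From mathcomp Require Import ssralg zmodp.
From mathcomp Require Import gproduct.
Set Implicit Arguments. Unset Strict Implicit. Unset Printing Implicit Defensive.
Local Open Scope group_scope.

Notation G := ('Z_2 * 'Z_4)%type.

Section Ortho.
Variable gT : finGroupType.

Definition norm_orthomorphism (th : gT -> gT) : Prop :=
  [/\ bijective th, th 1 = 1 & bijective (fun x => (x^-1 * th x))].

Definition orthogonal (th1 th2 : gT -> gT) : Prop :=
  bijective (fun x => (th1 x)^-1 * th2 x).

Definition Aset (th : gT -> gT) (i j : nat) : {set gT} :=
  [set x | (#[x] == i) && (#[th x] == j)].

Definition delta (th1 th2 : gT -> gT) (g : gT) : gT := (th1 g)^-1 * th2 g.

Definition disjoint_union4 (S1 S2 S3 S4 T : {set gT}) : Prop :=
  [disjoint S1 & S2] /\ [disjoint S1 & S3] /\ [disjoint S1 & S4] /\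
  [disjoint S2 & S3] /\ [disjoint S2 & S4] /\ [disjoint S3 & S4] /\
      S1 :|: S2 :|: S3 :|: S4 = T.
End Ortho.

From HB Require Import structures.
From mathcomp Require Import all_boot all_fingroup.
From mathcomp Require Import ssralg zmodp.
From mathcomp Require Import gproduct cyclic.
Local Open Scope group_scope.

(* In G = Z_2 x Z_4 every element has order 1, 2 or 4, and a
   non-identity element has order 4 exactly when its square is not 1.  Since
   the squares of G form the subgroup {1, (0,2)}, the quotient a^-1 b has
   order 4 iff exactly one of a, b has order 4.  Hence for x <> 1 (so that
   th1 x, th2 x <> 1 as well) the order of delta(x) is decided by whether
   o(th1 x) = o(th2 x): the four sets of (a) make up the preimage under delta
   of the involutions, the four sets of (b) the preimage of the elements of
   order 4, and all eight sets are pairwise disjoint because they prescribe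
   different orders of x or of th1 x. *)

Section FiniteMaps.
Variable gT : finGroupType.

Lemma bij_imset_disjoint_union4 (f : gT -> gT) (S1 S2 S3 S4 T : {set gT}) :
  bijective f -> disjoint_union4 S1 S2 S3 S4 (f @^-1: T) ->
  disjoint_union4 (f @: S1) (f @: S2) (f @: S3) (f @: S4) T.
Proof.
move=> bij_f [d12 [d13 [d14 [d23 [d24 [d34 cover]]]]]].
have [g _ gK] := bij_f; have f_inj := bij_inj bij_f.
rewrite /disjoint_union4 !(imset_disjoint f_inj) -!imsetU cover.
do 6!split=> //; apply/setP=> y; apply/imsetP/idP => [[x] | Ty].
- by rewrite inE => Tfx ->.
- by exists (g y); rewrite ?inE gK.
Qed.

Lemma codom_bij (T : finType) (f : T -> T) :
  (forall y, y \in codom f) -> bijective f.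
Proof.
move=> f_onto; pose g y := iinv (f_onto y).
have gK : cancel g f by move=> y; apply: f_iinv.
by apply: (bij_can_bij (injF_bij (can_inj gK))).
Qed.

Lemma Aset_disjointI (th : gT -> gT) (i j k l : nat) (B C : {set gT}) :
  (i != k) || (j != l) -> [disjoint Aset th i j :&: B & Aset th k l :&: C].
Proof.
move=> ij_ne_kl; rewrite -setI_eq0; apply/eqP/setP=> x; rewrite !inE.
apply/negbTE; apply: contraTN ij_ne_kl.
case/and3P => /andP [/andP [/eqP <- /eqP <-] _] /andP [/eqP <- /eqP <-] _.
by rewrite !eqxx.
Qed.

Lemma norm_orth_eq1 (th : gT -> gT) (x : gT) :
  norm_orthomorphism th -> (th x == 1) = (x == 1).
Proof. by case=> bij_th th1 _; rewrite -{1}th1 (inj_eq (bij_inj bij_th)). Qed.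

End FiniteMaps.

Lemma expG4 (x : G) : x ^+ 4 = 1.
Proof. by apply/eqP; move: x => [[[|[|//]] ?] [[|[|[|[|//]]]] ?]]. Qed.

Lemma order_G (x : G) : [|| #[x] == 1%N, #[x] == 2 | #[x] == 4].
Proof.
have ox_dvd4 : #[x] %| 4 by rewrite order_dvdn expG4.
have := dvdn_leq (isT : 0 < 4) ox_dvd4; have := order_gt0 x.
by move: ox_dvd4; case: #[x] => [|[|[|[|[|n]]]]].
Qed.

Lemma order4_G (x : G) : (#[x] == 4) = (x ^+ 2 != 1).
Proof. by rewrite -order_dvdn; case/or3P: (order_G x) => /eqP ->. Qed.

Lemma order2_G {x : G} : x != 1 -> (#[x] == 2) = ~~ (#[x] == 4).
Proof. by rewrite -order_eq1; case/or3P: (order_G x) => /eqP ->. Qed.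

(* The squares of G lie in a subgroup of order 2, so a^-1 b is an involution
   iff a and b are both or neither involutions (checked on all 64 pairs). *)
Lemma sq_divG (a b : G) :
  ((a^-1 * b) ^+ 2 == 1) = ((a ^+ 2 == 1) == (b ^+ 2 == 1)).
Proof.
by move: a b => [[[|[|//]] ?] [[|[|[|[|//]]]] ?]] [[[|[|//]] ?] [[|[|[|[|//]]]] ?]].
Qed.

Lemma order4_divG (a b : G) :
  (#[a^-1 * b] == 4) = ((#[a] == 4) != (#[b] == 4)).
Proof. by rewrite !order4_G sq_divG; case: (a ^+ 2 == 1) (b ^+ 2 == 1) => [] []. Qed.

Section DeltaPreimages.
Context {th1 th2 : G -> G}.
Hypothesis orth1 : norm_orthomorphism th1.
Hypothesis orth2 : norm_orthomorphism th2.
Let d := delta th1 th2.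
Let A := Aset th1.
Let A' := Aset th2.

Lemma delta1 : d 1 = 1.
Proof.
case: orth1 => _ e1 _; case: orth2 => _ e2 _.
by rewrite /d /delta e1 e2 invg1 mulg1.
Qed.

Lemma Aset_membership {x : G} : x != 1 ->
  [/\ (x \in A 4 4 :&: A' 4 4) = (#[x] == 4) && (#[th1 x] == 4) && (#[th2 x] == 4),
      (x \in A 2 4 :&: A' 2 4) = ~~ (#[x] == 4) && (#[th1 x] == 4) && (#[th2 x] == 4),
      (x \in A 4 2 :&: A' 4 2) = (#[x] == 4) && ~~ (#[th1 x] == 4) && ~~ (#[th2 x] == 4),
      (x \in A 2 2 :&: A' 2 2) = ~~ (#[x] == 4) && ~~ (#[th1 x] == 4) && ~~ (#[th2 x] == 4)
    & [/\ (x \in A 4 4 :&: A' 4 2) = (#[x] == 4) && (#[th1 x] == 4) && ~~ (#[th2 x] == 4),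
          (x \in A 4 2 :&: A' 4 4) = (#[x] == 4) && ~~ (#[th1 x] == 4) && (#[th2 x] == 4),
          (x \in A 2 4 :&: A' 2 2) = ~~ (#[x] == 4) && (#[th1 x] == 4) && ~~ (#[th2 x] == 4)
        & (x \in A 2 2 :&: A' 2 4) = ~~ (#[x] == 4) && ~~ (#[th1 x] == 4) && (#[th2 x] == 4)]].
Proof.
move=> x_n1.
have th1x_n1 : th1 x != 1 by rewrite norm_orth_eq1.
have th2x_n1 : th2 x != 1 by rewrite norm_orth_eq1.
rewrite !inE !(order2_G x_n1) !(order2_G th1x_n1) !(order2_G th2x_n1).
by case: (#[x] == 4) (#[th1 x] == 4) (#[th2 x] == 4) => [] [] [].
Qed.

Lemma preim_order4 :
  d @^-1: [set g | #[g] == 4] =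
  (A 4 4 :&: A' 4 2) :|: (A 4 2 :&: A' 4 4) :|: (A 2 4 :&: A' 2 2) :|: (A 2 2 :&: A' 2 4).
Proof.
apply/setP=> x; have [-> | x_n1] := eqVneq x 1.
  by rewrite !inE delta1 !order1.
rewrite !in_setU; have [_ _ _ _ [-> -> -> ->]] := Aset_membership x_n1.
rewrite !inE order4_divG.
by case: (#[x] == 4) (#[th1 x] == 4) (#[th2 x] == 4) => [] [] [].
Qed.

Lemma preim_order2 : injective d ->
  d @^-1: [set g | #[g] == 2] =
  (A 4 4 :&: A' 4 4) :|: (A 2 4 :&: A' 2 4) :|: (A 4 2 :&: A' 4 2) :|: (A 2 2 :&: A' 2 2).
Proof.
move=> d_inj; apply/setP=> x; have [-> | x_n1] := eqVneq x 1.
  by rewrite !inE delta1 !order1.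
have dx_n1 : d x != 1 by rewrite -delta1 (inj_eq d_inj).
rewrite !in_setU; have [-> -> -> -> _] := Aset_membership x_n1.
rewrite !inE (order2_G dx_n1) order4_divG.
by case: (#[x] == 4) (#[th1 x] == 4) (#[th2 x] == 4) => [] [] [].
Qed.

End DeltaPreimages.

Theorem lemma2 (th1 th2 : G -> G) :
  norm_orthomorphism th1 -> norm_orthomorphism th2 ->
  let d := delta th1 th2 in
  let A := Aset th1 in
  let A' := Aset th2 in
  orthogonal th1 th2 <->
  disjoint_union4
      (d @: (A 4 4 :&: A' 4 4)) (d @: (A 2 4 :&: A' 2 4))
      (d @: (A 4 2 :&: A' 4 2)) (d @: (A 2 2 :&: A' 2 2))
      [set g : G | #[g] == 2]
  /\
  disjoint_union4
      (d @: (A 4 4 :&: A' 4 2)) (d @: (A 4 2 :&: A' 4 4))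
      (d @: (A 2 4 :&: A' 2 2)) (d @: (A 2 2 :&: A' 2 4))
      [set g : G | #[g] == 4].
Proof.
move=> orth1 orth2 d A A'; split=> [d_bij | [[_ [_ [_ [_ [_ [_ cover2]]]]]]
                                            [_ [_ [_ [_ [_ [_ cover4]]]]]]]].
- split; apply: bij_imset_disjoint_union4 => //.
  + by rewrite /disjoint_union4 !Aset_disjointI // (preim_order2 orth1 orth2 (bij_inj d_bij)).
  + by rewrite /disjoint_union4 !Aset_disjointI // (preim_order4 orth1 orth2).
- apply: codom_bij => y; have [-> | y_n1] := eqVneq y 1.
    by rewrite -(delta1 orth1 orth2) codom_f.
  have : y \in [set g : G | #[g] == 2] :|: [set g : G | #[g] == 4].
    by rewrite !inE (order2_G y_n1) orNb.
  by rewrite -cover2 -cover4 -!imsetU => /imsetP [x _ ->]; apply: codom_f.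
Qed.
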